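(* Let $\mathcal{G}$ be a finite connected undirected simple graph with vertices $1,\dots,N$, let $p$ be a prime and $0\le\iota\le\kappa$ integers. If $h\in\mathcal{H}(\mathcal{G},p^\kappa)$ satisfies $p^\iota h(i)\equiv0\pmod{p^\kappa}$ for all $i$, then there exists $h'\in\mathcal{H}(\mathcal{G},p^\iota)$ with $h(i)\equiv p^{\kappa-\iota}h'(i)\pmod{p^\kappa}$ for all $i$.
   Context: The Laplacian $\nabla^2$ is the $N\times N$ integer matrix with $\nabla^2_{ii}=d_i$ (degree of $i$), $\nabla^2_{ij}=-1$ if $i,j$ adjacent, $0$ otherwise. $\mathbf{Z}_M=\{0,\dots,M-1\}$. $\mathcal{H}(\mathcal{G},M)$ denotes the set of functions $h:\{1,\dots,N\}\to\mathbf{Z}_M$ with $(\nabla^2h)(i)\equiv0\pmod M$ for all $i$. *)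

From mathcomp Require Import all_boot all_order all_algebra.
Set Implicit Arguments. Unset Strict Implicit. Unset Printing Implicit Defensive.
Import GRing.Theory Num.Theory.
Local Open Scope ring_scope.

(* A finite simple undirected graph on vertices 'I_N (= {0,..,N-1}, standing
   for 1..N) is given by a symmetric irreflexive adjacency relation e. *)
Definition simple_graph (N : nat) (e : rel 'I_N) : Prop :=
  symmetric e /\ irreflexive e.

Definition connected_graph (N : nat) (e : rel 'I_N) : Prop :=
  forall i j, connect e i j.

Definition deg (N : nat) (e : rel 'I_N) (i : 'I_N) : nat := #|[set j | e i j]|.

Definition laplacian (N : nat) (e : rel 'I_N) : 'M[int]_N :=
  \matrix_(i, j) (if i == j then (deg e i)%:Z else if e i j then -1 else 0).

Definition lap_apply (N : nat) (e : rel 'I_N) (h : 'I_N -> nat) (i : 'I_N) : int :=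
  \sum_j laplacian e i j * (h j)%:Z.

(* H(G, M): functions h : vertices -> Z_M = {0..M-1} with nabla^2 h = 0 mod M *)
Definition harmonic_mod (N : nat) (e : rel 'I_N) (M : nat) (h : 'I_N -> nat) : Prop :=
  (forall i, (h i < M)%N) /\ (forall i, (M%:Z %| lap_apply e h i)%Z).

From mathcomp Require Import all_boot all_order all_algebra.
Set Implicit Arguments. Unset Strict Implicit. Unset Printing Implicit Defensive.
Import GRing.Theory Num.Theory.

(* Write [d := p^(kappa - iota)].  Since [p^kappa = p^iota * d], the torsion
   hypothesis says exactly that [d] divides every [h i], so [h = d * h'] with
   [h' := h / d]; the Laplacian is linear, hence [p^iota * d] dividing
   [lap (d * h') = d * lap h'] means [p^iota] divides [lap h']. *)

Lemma lap_apply_scale (N : nat) (e : rel 'I_N) (d : nat) (g : 'I_N -> nat)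
    (i : 'I_N) :
  lap_apply e (fun j => d * g j)%N i = (d%:Z * lap_apply e g i)%R.
Proof.
rewrite /lap_apply mulr_sumr; apply: eq_bigr => j _.
by rewrite PoszM mulrCA.
Qed.

Lemma harmonic_mod_scale (N : nat) (e : rel 'I_N) (m d : nat)
    (f g : 'I_N -> nat) :
  (0 < d)%N -> (forall j, f j = d * g j)%N ->
  harmonic_mod e (d * m) f -> harmonic_mod e m g.
Proof.
move=> d_gt0 fE [lt_f dvd_lap]; split=> i.
  by rewrite -(ltn_pmul2l d_gt0) -fE; exact: lt_f.
have := dvd_lap i.
have -> : lap_apply e f i = lap_apply e (fun j => d * g j)%N i.
  by apply: eq_bigr => j _; rewrite fE.
by rewrite lap_apply_scale PoszM dvdz_mul2l // -lt0n.
Qed.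

Lemma dvdn_mul_mod0 (a d x : nat) :
  (0 < a)%N -> (a * x = 0 %[mod a * d])%N -> (d %| x)%N.
Proof.
by move=> a_gt0; rewrite mod0n => /eqP; rewrite -/(dvdn _ _) dvdn_pmul2l.
Qed.

Theorem lemma2 (N : nat) (e : rel 'I_N) (Hsimple : simple_graph e)
  (Hconn : connected_graph e) (p : nat) (Hp : prime p) (iota kappa : nat)
  (Hik : (iota <= kappa)%N) (h : 'I_N -> nat)
  (Hh : harmonic_mod e (p ^ kappa) h)
  (Htor : forall i, (p ^ iota * h i = 0 %[mod p ^ kappa])%N) :
  exists h' : 'I_N -> nat, harmonic_mod e (p ^ iota) h' /\
    forall i, (h i = p ^ (kappa - iota) * h' i %[mod p ^ kappa])%N.
Proof.
have p_gt0 : (0 < p)%N by exact: prime_gt0.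
set d := (p ^ (kappa - iota))%N.
have d_gt0 : (0 < d)%N by rewrite expn_gt0 p_gt0.
have pk_split : (p ^ kappa = p ^ iota * d)%N by rewrite /d -expnD subnKC.
have h_split i : h i = (d * (h i %/ d))%N.
  rewrite mulnC divnK //; apply: (@dvdn_mul_mod0 (p ^ iota)).
    by rewrite expn_gt0 p_gt0.
  by rewrite -pk_split.
exists (fun i => (h i %/ d)%N); split; last by move=> i; rewrite -h_split.
apply: (harmonic_mod_scale d_gt0 h_split).
by rewrite mulnC -pk_split.
Qed.
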